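(* In the two-source model, let $t\in\mathbb N$ and let $(U_t,X_t,Q_t)$ be any joint distribution (with the given marginal of $(U_t,X_t)$) such that $X_t\in Q_t$ almost surely and $Q_t$ is independent of $U_t$. Then $$\mathbb E|Q_t|\;\ge\;2-\pi_t(A)-\pi_t(B).$$ Consequently, any scheme satisfying decodability and the privacy constraint $I(X_{\mathcal B_t};Q_0,\dots,Q_t)=0$ has $1/R_t\ge 2-\pi_t(A)-\pi_t(B)$.
   Context: Requests $X_t\in\{A,B\}$, $t\ge0$, form a Markov chain with transition matrix $M$; privacy modes $F_t$ are a known sequence with $F_0=\mathrm{ON}$. Queries take values in $\{\{A\},\{B\},\{A,B\}\}$ with download cost $|Q_t|L$, and the rate satisfies $R_t\le L/(L\,\mathbb E|Q_t|)$. $\mathcal B_t=\{i\le t: F_i=\mathrm{ON}\}\cup\{i: i\ge t+1\}$, $F^-(t)=\max\{i\le t: F_i=\mathrm{ON}\}$, $U_t=(X_{F^-(t)},X_{t+1})$ (note $F^-(t),t+1\in\mathcal B_t$), $p(x\mid u)=P(X_t=x\mid U_t=u)$, and $\pi_t(x)=\min_u p(x\mid u)$ over $u\in\{A,B\}^2$ with $P(U_t=u)>0$. *)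

From HB Require Import structures.
From mathcomp Require Import all_boot all_order all_algebra.
Set Implicit Arguments. Unset Strict Implicit. Unset Printing Implicit Defensive.
Import Order.TTheory GRing.Theory Num.Theory.
Local Open Scope ring_scope.

Inductive req := A | B.
Definition req2bool (r : req) : bool := if r is A then true else false.
Definition bool2req (b : bool) : req := if b then A else B.
Lemma req_can : cancel req2bool bool2req. Proof. by case. Qed.
HB.instance Definition _ := Finite.copy req (can_type req_can).

Section Model.
Variable R : realFieldType.

(* M : transition matrix (M a b = P(X_{s+1}=b | X_s=a)), mu : law of X_0. *)
Definition stochastic (M : req -> req -> R) :=
  (forall a b, 0 <= M a b) /\ (forall a, \sum_(b : req) M a b = 1).
Definition distrib (mu : req -> R) :=
  (forall a, 0 <= mu a) /\ \sum_(a : req) mu a = 1.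

Fixpoint Mpow (M : req -> req -> R) (k : nat) (a b : req) : R :=
  match k with
  | 0 => (a == b)%:R
  | k'.+1 => \sum_(c : req) Mpow M k' a c * M c b
  end.

Definition muAt (M : req -> req -> R) (mu : req -> R) (s : nat) (a : req) : R :=
  \sum_(c : req) mu c * Mpow M s c a.

(* Privacy modes: F i = true means F_i = ON. *)
(* F^-(t) = max { i <= t : F_i = ON } (equals 0 when F 0 = ON and no other). *)
Fixpoint Fminus (F : nat -> bool) (t : nat) : nat :=
  match t with
  | 0 => 0
  | t'.+1 => if F t then t else Fminus F t'
  end.

Definition inB (F : nat -> bool) (t i : nat) : bool := ((i <= t)%N && F i) || (t < i)%N.

(* joint law of (U_t, X_t) with U_t = (X_{F^-(t)}, X_{t+1}) *)
Definition pUX (M : req -> req -> R) (mu : req -> R) (F : nat -> bool) (t : nat)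
  (u : req * req) (x : req) : R :=
  muAt M mu (Fminus F t) u.1 * Mpow M (t - Fminus F t) u.1 x * M x u.2.

Definition pU M mu F t (u : req * req) : R := \sum_(x : req) pUX M mu F t u x.

Definition pcond M mu F t (x : req) (u : req * req) : R := pUX M mu F t u x / pU M mu F t u.

(* pi_t(x) = min over u with P(U_t=u)>0 of p(x|u); the neutral element 1 is harmless
   since conditional probabilities are <= 1. *)
Definition pi_t M mu F t (x : req) : R :=
  \big[Num.min/1]_(u : req * req | 0 < pU M mu F t u) pcond M mu F t x u.

Definition pathProb (M : req -> req -> R) (mu : req -> R) (n : nat)
  (xs : {ffun 'I_n.+1 -> req}) : R :=
  mu (xs ord0) * \prod_(i < n) M (xs (inord i)) (xs (inord i.+1)).

End Model.

From HB Require Import structures.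
From mathcomp Require Import all_boot all_order all_algebra.
From mathcomp Require Import lra zify.
Set Implicit Arguments. Unset Strict Implicit. Unset Printing Implicit Defensive.
Import Order.TTheory GRing.Theory Num.Theory.
Local Open Scope ring_scope.

(* Independence of Q_t and U_t gives P(Q_t = q | U_t = u) = P(Q_t = q) whenever P(U_t = u) > 0.
   Since X_t lies in Q_t, the event Q_t = {x} forces X_t = x, hence
   P(Q_t = {x}) <= P(X_t = x | U_t = u) for every such u, i.e. P(Q_t = {x}) <= pi_t(x).
   Over {A, B} a nonempty query satisfies |q| >= 2 - [q = {A}] - [q = {B}], and taking
   expectations yields E|Q_t| >= 2 - pi_t(A) - pi_t(B).
   A private scheme induces such a joint law by marginalising over the paths X_0..X_{t+1}:
   U_t is a function of X_{B_t}, so the factorisation that privacy provides on every class of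
   paths agreeing on B_t passes to the coarser classes {U_t = u}; the (U_t, X_t)-marginal is
   the forward recursion of the chain with X_{F^-(t)}, X_t and X_{t+1} pinned. *)

Lemma sum_fibers (R : nmodType) (I J : finType) (P : pred I) (h : I -> J) (G : I -> R) :
  \sum_j \sum_(i | P i && (h i == j)) G i = \sum_(i | P i) G i.
Proof. by rewrite [RHS](partition_big h predT). Qed.

Lemma sum_eq_indicator (R : pzSemiRingType) (I : finType) (j : I) (G : I -> R) :
  \sum_i (i == j)%:R * G i = G j.
Proof. by under eq_bigr do rewrite mulr_natl mulrb; rewrite -big_mkcond big_pred1_eq. Qed.

Lemma sum_fibers_coarsen (R : pzSemiRingType) (T K : finType) (V : eqType)
    (k : T -> K) (g : T -> V) (G1 G2 : T -> R) (a : R) (v : V) :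
  (forall x y, k x = k y -> g x = g y) ->
  (forall x0, \sum_(x | k x == k x0) G1 x = (\sum_(x | k x == k x0) G2 x) * a) ->
  \sum_(x | g x == v) G1 x = (\sum_(x | g x == v) G2 x) * a.
Proof.
move=> gk prop; rewrite !(partition_big k predT) //= mulr_suml; apply: eq_bigr => z _.
case: (pickP (fun x => k x == z)) => [x0 /eqP <- | no_z]; last first.
  by rewrite !big_pred0 ?mul0r // => x; rewrite no_z andbF.
have fiberE x : (g x == v) && (k x == k x0) = (g x0 == v) && (k x == k x0).
  by case: (k x =P k x0) => [/gk ->|]; rewrite ?andbF.
rewrite !(eq_bigl _ _ fiberE); case: (g x0 == v) => /=; first exact: prop.
by rewrite !big_pred0 ?mul0r.
Qed.

Lemma le_inv_rate (R : realFieldType) (L Rt E : R) :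
  0 < L -> 0 < Rt -> Rt <= L / (L * E) -> E <= 1 / Rt.
Proof.
move=> L_gt0 Rt_gt0; rewrite invfM mulrA mulfV ?gt_eqF // !mul1r => Rt_le.
have E_gt0 : 0 < E by rewrite -invr_gt0 (lt_le_trans Rt_gt0 Rt_le).
by rewrite -(invrK E) lef_pV2 ?posrE ?invr_gt0.
Qed.

(* [pi_t M mu F t] unfolds to [min_cond (pUX M mu F t)]. *)
Definition min_cond (R : realFieldType) (U X : finType) (p : U -> X -> R) (y : X) : R :=
  \big[Num.min/1]_(u | 0 < \sum_(x : X) p u x) (p u y / \sum_(x : X) p u x).

Section QueryLaw.
Variables (R : realFieldType) (U X : finType).
Variables (p : U -> X -> R) (P : U -> X -> {set X} -> R).
Hypothesis P_ge0 : forall u x q, 0 <= P u x q.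
Hypothesis P_marg : forall u x, \sum_q P u x q = p u x.
Hypothesis P_supp : forall u x (q : {set X}), x \notin q -> P u x q = 0.
Hypothesis P_indep :
  forall u q, \sum_x P u x q = (\sum_x p u x) * \sum_u' \sum_x P u' x q.

Definition lawQ (q : {set X}) : R := \sum_u \sum_x P u x q.

Definition total_mass : R := \sum_u \sum_x p u x.

Lemma lawQ_ge0 q : 0 <= lawQ q.
Proof. by do 2!(apply: sumr_ge0 => ? _). Qed.

Lemma sum_lawQ : \sum_q lawQ q = total_mass.
Proof.
rewrite exchange_big; apply: eq_bigr => u _.
by rewrite exchange_big; apply: eq_bigr => x _.
Qed.

Lemma total_mass01 : total_mass = 0 \/ total_mass = 1.
Proof.
have lawQE q : lawQ q = total_mass * lawQ q.
  by rewrite {1}/lawQ (eq_bigr _ (fun u _ => P_indep u q)) -mulr_suml.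
have : total_mass * total_mass = total_mass.
  by rewrite -{2 3}sum_lawQ mulr_sumr -(eq_bigr _ (fun q _ => lawQE q)).
move/eqP; rewrite -subr_eq0 -{3}(mulr1 total_mass) -mulrBr mulf_eq0 subr_eq0.
by case/orP=> /eqP; [left | right].
Qed.

Lemma lawQ_set0 : lawQ set0 = 0.
Proof. by apply: big1 => u _; apply: big1 => x _; rewrite P_supp ?inE. Qed.

Lemma lawQ_set1_le y : lawQ [set y] <= min_cond p y.
Proof.
apply: le_bigmin => [|u pu_gt0].
  rewrite (le_trans _ (_ : total_mass <= 1)) //; last by case: total_mass01 => ->.
  by rewrite -sum_lawQ (bigD1 [set y]) //= lerDl sumr_ge0 // => q _; exact: lawQ_ge0.
rewrite ler_pdivlMr // mulrC -P_indep -P_marg.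
rewrite (bigD1 y) //= big1 => [|x /negbTE xy]; last by rewrite P_supp // inE xy.
by rewrite addr0 (bigD1 [set y]) //= lerDl sumr_ge0.
Qed.

Lemma min_cond_total_mass0 y : total_mass = 0 -> min_cond p y = 1.
Proof.
have pU_ge0 u : 0 <= \sum_x p u x by apply: sumr_ge0 => x _; rewrite -P_marg sumr_ge0.
move/psumr_eq0P => pU0; rewrite /min_cond big_pred0 // => u.
by rewrite pU0 ?ltxx.
Qed.

Lemma expected_cardE :
  \sum_u \sum_x \sum_q P u x q * #|q|%:R = \sum_q lawQ q * #|q|%:R.
Proof.
rewrite [RHS](eq_bigr (fun q => \sum_u \sum_x P u x q * #|q|%:R)) => [|q _].
  by rewrite [RHS]exchange_big; apply: eq_bigr => u _; rewrite [RHS]exchange_big.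
by rewrite mulr_suml; apply: eq_bigr => u _; rewrite mulr_suml.
Qed.

End QueryLaw.

Lemma card_set_req_ge (q : {set req}) :
  q != set0 -> (2 <= (q == [set A]) + (q == [set B]) + #|q|)%N.
Proof.
case/set0Pn => x xq; have [/eqP/cards1P [y ->]|q_neq1] := eqVneq #|q| 1%N.
  have AB : ([set A] == [set B]) = false by apply/negbTE/eqP => /setP/(_ A); rewrite !inE.
  by case: y; rewrite eqxx cards1 ?AB // eq_sym AB.
by move: q_neq1; rewrite (cardsD1 x q) xq; lia.
Qed.

Lemma expected_card_ge (R : realFieldType) (U : finType)
    (p : U -> req -> R) (P : U -> req -> {set req} -> R) :
  (forall u x q, 0 <= P u x q) ->
  (forall u x, \sum_q P u x q = p u x) ->
  (forall u x (q : {set req}), x \notin q -> P u x q = 0) ->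
  (forall u q, \sum_x P u x q = (\sum_x p u x) * \sum_u' \sum_x P u' x q) ->
  2 - min_cond p A - min_cond p B <= \sum_u \sum_x \sum_q P u x q * #|q|%:R.
Proof.
move=> P_ge0 P_marg P_supp P_indep; rewrite expected_cardE.
have lawQ_ge0 := lawQ_ge0 P_ge0.
case: (total_mass01 P_marg P_indep) => [m0|m1].
  rewrite !(min_cond_total_mass0 P_ge0 P_marg) // addrK subrr.
  by apply: sumr_ge0 => q _; rewrite mulr_ge0.
have sum_lawQ_eq s : \sum_q lawQ P q * (q == s)%:R = lawQ P s.
  by under eq_bigr do rewrite mulrC; rewrite sum_eq_indicator.
have lawQ_set1_le y := lawQ_set1_le P_ge0 P_marg P_supp P_indep y.
apply: le_trans (_ : 2 - lawQ P [set A] - lawQ P [set B] <= _).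
  by move: (lawQ_set1_le A) (lawQ_set1_le B); lra.
have two_mass : 2 = 2 * \sum_q lawQ P q by rewrite (sum_lawQ P_marg) m1 mulr1.
rewrite {1}two_mass mulr_sumr -!sum_lawQ_eq -!sumrB.
apply: ler_sum => q _; have [->|q_ne0] := eqVneq q set0.
  by rewrite lawQ_set0 // !(mul0r, mulr0) !subrr.
rewrite [2 * _]mulrC -!mulrBr ler_wpM2l //.
have := card_set_req_ge q_ne0; rewrite -(ler_nat R) !natrD; lra.
Qed.

Lemma Fminus_le (F : nat -> bool) t : (Fminus F t <= t)%N.
Proof. by elim: t => //= t IH; case: ifP => // _; exact: leqW. Qed.

Lemma Fminus_on (F : nat -> bool) t : F 0%N -> F (Fminus F t).
Proof. by move=> F0; elim: t => //= t IH; case: ifP. Qed.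

Section PathExtension.
Variables (T : finType) (n : nat).

Definition frcons (ys : {ffun 'I_n.+1 -> T}) (b : T) : {ffun 'I_n.+2 -> T} :=
  [ffun i : 'I_n.+2 => if (i < n.+1)%N then ys (inord i) else b].

Lemma frcons_inord ys b j : (j <= n)%N -> frcons ys b (inord j) = ys (inord j).
Proof. by move=> le_jn; rewrite ffunE inordK ?ltnS ?le_jn // leqW. Qed.

Lemma frcons_max ys b : frcons ys b ord_max = b.
Proof. by rewrite ffunE ltnn. Qed.

Lemma frcons_inord_max ys b : frcons ys b (inord n.+1) = b.
Proof. by rewrite ffunE inordK // ltnn. Qed.

Lemma sum_frcons (R : nmodType) (G : {ffun 'I_n.+2 -> T} -> R) :
  \sum_xs G xs = \sum_ys \sum_b G (frcons ys b).
Proof.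
pose unfrcons (xs : {ffun 'I_n.+2 -> T}) := ([ffun j : 'I_n.+1 => xs (inord j)], xs ord_max).
rewrite (reindex (fun yb => frcons yb.1 yb.2)) ?pair_big //; apply: onW_bij.
exists unfrcons => [[ys b]|xs]; rewrite /unfrcons.
  rewrite frcons_max; congr pair; apply/ffunP => j.
  by rewrite !ffunE inordK ?ltn_ord ?inord_val // ltnS ltnW.
apply/ffunP => i; rewrite ffunE /=; case: ifPn => [lt_in|].
  by rewrite ffunE inordK // inord_val.
rewrite -leqNgt => le_ni; congr (xs _).
by apply/val_inj/eqP; rewrite /= eqn_leq le_ni -ltnS ltn_ord.
Qed.

End PathExtension.

Section ForwardRecursion.
Variables (R : realFieldType) (M : req -> req -> R) (mu : req -> R).

Lemma Mpow1 a b : Mpow M 1 a b = M a b.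
Proof. by rewrite /=; under eq_bigr do rewrite eq_sym; rewrite sum_eq_indicator. Qed.

Lemma muAt0 b : muAt M mu 0 b = mu b.
Proof. by rewrite /muAt /=; under eq_bigr do rewrite mulrC; rewrite sum_eq_indicator. Qed.

Lemma muAtS k b : muAt M mu k.+1 b = \sum_a muAt M mu k a * M a b.
Proof.
rewrite /muAt /=; under eq_bigr do rewrite mulr_sumr.
rewrite exchange_big; apply: eq_bigr => a _; rewrite mulr_suml.
by apply: eq_bigr => c _; rewrite mulrA.
Qed.

Lemma pathProb_frcons n (ys : {ffun 'I_n.+1 -> req}) b :
  pathProb M mu (frcons ys b) = pathProb M mu ys * M (ys ord_max) b.
Proof.
rewrite /pathProb big_ord_recr /= mulrA frcons_inord_max frcons_inord //.
have -> : frcons ys b ord0 = ys ord0.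
  by rewrite ffunE /=; congr (ys _); apply/val_inj; rewrite /= inordK.
have -> : inord n = ord_max :> 'I_n.+1 by apply/val_inj; rewrite /= inordK.
by congr (_ * _ * _); apply: eq_bigr => i _; rewrite !frcons_inord // ltnW.
Qed.

Variable c : nat -> req -> bool.

Definition fwd n (b : req) : R :=
  \sum_(xs : {ffun 'I_n.+1 -> req} | [forall i : 'I_n.+1, c i (xs i)] && (xs ord_max == b))
    pathProb M mu xs.

Lemma fwd0 b : fwd 0 b = (c 0 b)%:R * mu b.
Proof.
rewrite /fwd; have -> : ord_max = ord0 :> 'I_1 by apply/val_inj.
rewrite (eq_bigl (fun xs => c 0 b && (xs == [ffun=> b]))) => [|xs].
  case: (c 0 b); last by rewrite big_pred0 ?mul0r.
  by rewrite /= big_pred1_eq mul1r /pathProb big_ord0 mulr1 ffunE.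
have -> : (xs == [ffun=> b]) = (xs ord0 == b).
  apply/eqP/eqP => [->|<-]; rewrite ?ffunE //.
  by apply/ffunP => i; rewrite ffunE (ord1 i).
have -> : [forall i : 'I_1, c i (xs i)] = c 0 (xs ord0).
  by apply/forallP/idP => [/(_ ord0)|c0 i]; rewrite // (ord1 i).
by case: (xs ord0 =P b) => [->|_]; rewrite ?andbF.
Qed.

Lemma fwdS n b : fwd n.+1 b = (c n.+1 b)%:R * \sum_a fwd n a * M a b.
Proof.
have forall_frcons ys b' : [forall i : 'I_n.+2, c i (frcons ys b' i)] =
    [forall i : 'I_n.+1, c i (ys i)] && c n.+1 b'.
  apply/forallP/andP => [all_c|[/forallP all_c cb] i].
    split; last by have := all_c ord_max; rewrite frcons_max.
    apply/forallP => j; have := all_c (inord j).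
    have le_jn : (j <= n)%N by rewrite -ltnS.
    by rewrite frcons_inord // inord_val inordK // ltnS ltnW.
  rewrite ffunE; case: ifPn => [lt_in|]; first by have := all_c (inord i); rewrite inordK.
  rewrite -leqNgt => le_ni.
  by rewrite (_ : i = n.+1 :> nat) //; apply/eqP; rewrite eqn_leq le_ni -ltnS ltn_ord.
have -> : \sum_a fwd n a * M a b =
    \sum_(ys : {ffun 'I_n.+1 -> req} | [forall i : 'I_n.+1, c i (ys i)])
      pathProb M mu ys * M (ys ord_max) b.
  rewrite -(sum_fibers _ (fun ys : {ffun 'I_n.+1 -> req} => ys ord_max)).
  by apply: eq_bigr => a _; rewrite mulr_suml; apply: eq_bigr => ys /andP[_ /eqP ->].
rewrite /fwd big_mkcond sum_frcons mulr_sumr [RHS]big_mkcond; apply: eq_bigr => ys _.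
rewrite (bigD1 b) //= big1 => [|b' /negbTE nb']; last by rewrite frcons_max nb' andbF.
rewrite forall_frcons frcons_max eqxx andbT addr0 pathProb_frcons.
by case: (c n.+1 b); case: [forall i, _]; rewrite ?(mul1r, mul0r, andbF).
Qed.

Lemma fwd_free_prefix k b :
  (forall i a, (i < k)%N -> c i a) -> fwd k b = (c k b)%:R * muAt M mu k b.
Proof.
elim: k b => [|k IH] b free; first by rewrite fwd0 muAt0.
rewrite fwdS muAtS; congr (_ * _); apply: eq_bigr => a _.
by rewrite IH => [|i a' lt_ik]; [rewrite free // mul1r | apply: free; apply: ltnW].
Qed.

Lemma fwd_free_gap m k b : (m < k)%N ->
  (forall i a, (m < i < k)%N -> c i a) ->
  fwd k b = (c k b)%:R * \sum_a fwd m a * Mpow M (k - m) a b.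
Proof.
elim: k b => // k IH b lt_mk free; rewrite fwdS; congr (_ * _).
move: lt_mk; rewrite ltnS leq_eqVlt => /orP[/eqP <-|lt_mk].
  by rewrite subSnn; under [RHS]eq_bigr do rewrite Mpow1.
have fwd_k a : fwd k a = \sum_d fwd m d * Mpow M (k - m) d a.
  rewrite IH // => [|i a' /andP[lt_mi lt_ik]]; last by apply: free; rewrite lt_mi ltnW.
  by rewrite free ?lt_mk ?ltnSn // mul1r.
under eq_bigr do rewrite fwd_k mulr_suml.
rewrite exchange_big subSn 1?ltnW //; apply: eq_bigr => d _ /=; rewrite mulr_sumr.
by apply: eq_bigr => a _; rewrite mulrA.
Qed.

End ForwardRecursion.

Section PinnedPaths.
Variables (R : realFieldType) (M : req -> req -> R) (mu : req -> R).
Variables (f t : nat) (u1 u2 x : req).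
Hypothesis le_ft : (f <= t)%N.

Definition pin (i : nat) (a : req) : bool :=
  [&& (i == f) ==> (a == u1), (i == t) ==> (a == x) & (i == t.+1) ==> (a == u2)].

Lemma forall_pin (xs : {ffun 'I_t.+2 -> req}) :
  [forall i : 'I_t.+2, pin i (xs i)] =
  ((xs (inord f), xs ord_max) == (u1, u2)) && (xs (inord t) == x).
Proof.
have val_f : (inord f : 'I_t.+2) = f :> nat by rewrite inordK // ltnS leqW.
have val_t : (inord t : 'I_t.+2) = t :> nat by rewrite inordK.
rewrite xpair_eqE -andbA; apply/forallP/and3P => [pin_xs|[/eqP xs_f /eqP xs_max /eqP xs_t] i].
  move: (pin_xs (inord f)) (pin_xs (inord t)) (pin_xs ord_max).
  by rewrite /pin val_f val_t /= !eqxx /= => /and3P[-> _ _] /and3P[_ -> _] /and3P[_ _ ->].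
apply/and3P; split; apply/implyP => /eqP val_i.
- by rewrite (_ : i = inord f) ?xs_f //; apply/val_inj; rewrite /= val_f.
- by rewrite (_ : i = inord t) ?xs_t //; apply/val_inj; rewrite /= val_t.
- by rewrite (_ : i = ord_max) ?xs_max //; apply/val_inj.
Qed.

Lemma fwd_pin_t a :
  fwd M mu pin t a = (a == x)%:R * (muAt M mu f u1 * Mpow M (t - f) u1 a).
Proof.
have fwd_f b : fwd M mu pin f b = (pin f b)%:R * muAt M mu f b.
  apply: fwd_free_prefix => i b' lt_if.
  by apply/and3P; split; apply/implyP => /eqP eq_i; lia.
move: le_ft; rewrite leq_eqVlt => /orP[/eqP eq_ft|lt_ft].
  rewrite -eq_ft subnn fwd_f /pin eqxx /= -eq_ft eqxx.
  have -> : (f == f.+1) = false by lia.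
  case: (a =P u1) => [->|/eqP ne_a]; first by rewrite eqxx /= andbT mulr1.
  by rewrite (eq_sym u1) (negbTE ne_a) /= !mulr0n mul0r !mulr0.
rewrite (@fwd_free_gap _ M mu pin f t a lt_ft) => [|i b' /andP[lt_fi lt_it]]; last first.
  by apply/and3P; split; apply/implyP => /eqP eq_i; lia.
have -> : pin t a = (a == x) by rewrite /pin (gtn_eqF lt_ft) eqxx (ltn_eqF (ltnSn t)) /= andbT.
have pin_f b : pin f b = (b == u1).
  by rewrite /pin eqxx (ltn_eqF lt_ft) (ltn_eqF (ltnW lt_ft : (f < t.+1)%N)) /= !andbT.
congr (_ * _); under eq_bigr do rewrite fwd_f pin_f -mulrA.
by rewrite sum_eq_indicator.
Qed.

Lemma sum_pathProb_pinned :
  \sum_(xs : {ffun 'I_t.+2 -> req} |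
          ((xs (inord f), xs ord_max) == (u1, u2)) && (xs (inord t) == x))
    pathProb M mu xs = muAt M mu f u1 * Mpow M (t - f) u1 x * M x u2.
Proof.
have pin_last b : pin t.+1 b = (b == u2).
  by rewrite /pin eqxx (gtn_eqF (le_ft : (f < t.+1)%N)) (gtn_eqF (ltnSn t)).
rewrite (eq_bigl _ _ (fun xs => esym (forall_pin xs))).
rewrite -(sum_fibers _ (fun xs : {ffun 'I_t.+2 -> req} => xs ord_max)).
under eq_bigr do rewrite -/(fwd M mu pin t.+1 _) fwdS pin_last.
rewrite sum_eq_indicator; under eq_bigr do rewrite fwd_pin_t -mulrA.
by rewrite sum_eq_indicator.
Qed.

End PinnedPaths.

Section Scheme.
Variables (R : realFieldType) (M : req -> req -> R) (mu : req -> R).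
Variables (F : nat -> bool) (t : nat).
Hypothesis F0 : F 0%N = true.

Local Notation paths := {ffun 'I_t.+2 -> req}.
Local Notation queries := {ffun 'I_t.+1 -> {set req}}.

Variable Ps : paths -> queries -> R.
Hypothesis Ps_ge0 : forall (xs : paths) (qs : queries), 0 <= Ps xs qs.
Hypothesis Ps_marg : forall xs : paths, \sum_(qs : queries) Ps xs qs = pathProb M mu xs.
Hypothesis Ps_dec : forall (xs : paths) (qs : queries) (i : 'I_t.+1),
  xs (widen_ord (leqnSn _) i) \notin qs i -> Ps xs qs = 0.
Hypothesis Ps_priv : forall (xs0 : paths) (qs : queries),
  \sum_(xs : paths | [forall i : 'I_t.+2, inB F t i ==> (xs i == xs0 i)]) Ps xs qs =
  (\sum_(xs : paths | [forall i : 'I_t.+2, inB F t i ==> (xs i == xs0 i)])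
     \sum_(qs' : queries) Ps xs qs') * (\sum_(xs : paths) Ps xs qs).

Definition stateU (xs : paths) : req * req := (xs (inord (Fminus F t)), xs ord_max).

Definition lawUXQ (u : req * req) (x : req) (q : {set req}) : R :=
  \sum_(xs | (stateU xs == u) && (xs (inord t) == x))
    \sum_(qs : queries | qs ord_max == q) Ps xs qs.

Lemma sum_stateUX (G : paths -> R) :
  \sum_u \sum_x \sum_(xs | (stateU xs == u) && (xs (inord t) == x)) G xs = \sum_xs G xs.
Proof. by under eq_bigr do rewrite sum_fibers; rewrite [RHS](partition_big stateU predT). Qed.

Lemma sum_lastQ (G : queries -> R) :
  \sum_q \sum_(qs : queries | qs ord_max == q) G qs = \sum_qs G qs.
Proof. by rewrite [RHS](partition_big (fun qs : queries => qs ord_max) predT). Qed.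

Lemma sum_pathProb_UX u x :
  \sum_(xs | (stateU xs == u) && (xs (inord t) == x)) pathProb M mu xs =
  pUX M mu F t u x.
Proof. by case: u => u1 u2; apply: sum_pathProb_pinned; apply: Fminus_le. Qed.

Lemma lawUXQ_ge0 u x q : 0 <= lawUXQ u x q.
Proof. by do 2!(apply: sumr_ge0 => ? _). Qed.

Lemma lawUXQ_marg u x : \sum_q lawUXQ u x q = pUX M mu F t u x.
Proof.
rewrite -sum_pathProb_UX /lawUXQ exchange_big; apply: eq_bigr => xs _.
by rewrite sum_lastQ Ps_marg.
Qed.

Lemma lawUXQ_supp u x (q : {set req}) : x \notin q -> lawUXQ u x q = 0.
Proof.
move=> x_notin_q; apply: big1 => xs /andP[_ /eqP xs_t]; apply: big1 => qs /eqP qs_max.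
apply: (Ps_dec (i := ord_max)); rewrite qs_max (_ : widen_ord _ _ = inord t) ?xs_t //.
by apply/val_inj; rewrite /= inordK.
Qed.

Definition restrictB (xs : paths) : {ffun 'I_t.+2 -> option req} :=
  [ffun i : 'I_t.+2 => if inB F t i then Some (xs i) else None].

Lemma restrictB_eq xs xs0 :
  (restrictB xs == restrictB xs0) = [forall i : 'I_t.+2, inB F t i ==> (xs i == xs0 i)].
Proof.
apply/eqP/forallP => [/ffunP eqB i|agree]; last first.
  by apply/ffunP => i; rewrite !ffunE; case: ifP (implyP (agree i)) => // _ /(_ isT)/eqP ->.
by apply/implyP => iB; have := eqB i; rewrite !ffunE iB => -[->].
Qed.

Lemma stateU_restrictB xs ys : restrictB xs = restrictB ys -> stateU xs = stateU ys.
Proof.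
have fB : inB F t (inord (Fminus F t) : 'I_t.+2).
  by rewrite /inB inordK ?Fminus_on ?Fminus_le // ltnS leqW // Fminus_le.
have maxB : inB F t (ord_max : 'I_t.+2) by rewrite /inB /= ltnSn orbT.
move/ffunP => eqB; rewrite /stateU.
by move: (eqB (inord (Fminus F t))) (eqB ord_max); rewrite !ffunE fB maxB => -[->] [->].
Qed.

Lemma lawUXQ_indep u q :
  \sum_x lawUXQ u x q = pU M mu F t u * \sum_u' \sum_x lawUXQ u' x q.
Proof.
have pUE : pU M mu F t u = \sum_(xs | stateU xs == u) \sum_(qs : queries) Ps xs qs.
  rewrite /pU; under eq_bigr do rewrite -sum_pathProb_UX.
  by rewrite sum_fibers; under [RHS]eq_bigr do rewrite Ps_marg.
have indep qs : \sum_(xs | stateU xs == u) Ps xs qs = pU M mu F t u * \sum_xs Ps xs qs.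
  rewrite pUE; apply: (@sum_fibers_coarsen _ _ _ _ restrictB stateU (Ps^~ qs)
    (fun xs => \sum_(qs' : queries) Ps xs qs')) => [|xs0]; first exact: stateU_restrictB.
  by rewrite !(eq_bigl _ _ (restrictB_eq ^~ xs0)).
rewrite /lawUXQ sum_fibers sum_stateUX exchange_big [X in _ * X]exchange_big mulr_sumr.
by apply: eq_bigr => qs _; rewrite indep.
Qed.

Lemma expected_card_lawUXQ :
  \sum_u \sum_x \sum_q lawUXQ u x q * #|q|%:R =
  \sum_xs \sum_qs Ps xs qs * #|qs ord_max|%:R.
Proof.
rewrite -sum_stateUX; apply: eq_bigr => u _; apply: eq_bigr => x _.
under eq_bigr do rewrite mulr_suml.
rewrite exchange_big; apply: eq_bigr => xs _; rewrite -sum_lastQ.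
by apply: eq_bigr => q _; rewrite mulr_suml; apply: eq_bigr => qs /eqP ->.
Qed.

End Scheme.

Theorem mainTheorem4 (R : realFieldType) (M : req -> req -> R) (mu : req -> R)
  (F : nat -> bool) (t : nat) :
  stochastic M -> distrib mu -> F 0%N = true ->
  (* Part 1: any joint law P of (U_t, X_t, Q_t) with the given (U_t,X_t)-marginal,
     X_t \in Q_t a.s., Q_t independent of U_t. *)
  (forall P : (req * req) -> req -> {set req} -> R,
     (forall u x (q : {set req}), 0 <= P u x q) ->
     (forall u x, \sum_(q : {set req}) P u x q = pUX M mu F t u x) ->
     (forall u (x : req) (q : {set req}), x \notin q -> P u x q = 0) ->
     (forall u (q : {set req}), \sum_(x : req) P u x q =
        pU M mu F t u * \sum_(u' : req * req) \sum_(x : req) P u' x q) ->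
     2 - pi_t M mu F t A - pi_t M mu F t B <=
       \sum_(u : req * req) \sum_(x : req) \sum_(q : {set req}) P u x q * #|q|%:R)
  /\
  (* Part 2: any scheme (joint law of X_0..X_{t+1} and Q_0..Q_t) that is decodable,
     private w.r.t. X_{B_t}, and has rate R_t <= L / (L E|Q_t|). *)
  (forall (Ps : {ffun 'I_t.+2 -> req} -> {ffun 'I_t.+1 -> {set req}} -> R)
          (L Rt : R),
     (forall (xs : {ffun 'I_t.+2 -> req}) (qs : {ffun 'I_t.+1 -> {set req}}), 0 <= Ps xs qs) ->
     (forall (xs : {ffun 'I_t.+2 -> req}), \sum_(qs : {ffun 'I_t.+1 -> {set req}}) Ps xs qs
                   = pathProb M mu xs) ->
     (forall (xs : {ffun 'I_t.+2 -> req}) (qs : {ffun 'I_t.+1 -> {set req}}) (i : 'I_t.+1), xs (widen_ord (leqnSn _) i) \notin qs i ->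
                                  Ps xs qs = 0) ->
     (forall (xs0 : {ffun 'I_t.+2 -> req}) (qs : {ffun 'I_t.+1 -> {set req}}),
        \sum_(xs : {ffun 'I_t.+2 -> req} | [forall i : 'I_t.+2, inB F t i ==> (xs i == xs0 i)]) Ps xs qs =
        (\sum_(xs : {ffun 'I_t.+2 -> req} | [forall i : 'I_t.+2, inB F t i ==> (xs i == xs0 i)])
           \sum_(qs' : {ffun 'I_t.+1 -> {set req}}) Ps xs qs') *
        (\sum_(xs : {ffun 'I_t.+2 -> req}) Ps xs qs)) ->
     0 < L -> 0 < Rt ->
     Rt <= L / (L * \sum_(xs : {ffun 'I_t.+2 -> req})
                      \sum_(qs : {ffun 'I_t.+1 -> {set req}})
                         Ps xs qs * #|qs ord_max|%:R) ->
     2 - pi_t M mu F t A - pi_t M mu F t B <= 1 / Rt).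
Proof.
move=> _ _ F0; split=> [P|Ps L Rt Ps_ge0 Ps_marg Ps_dec Ps_priv L_gt0 Rt_gt0 rate].
  exact: expected_card_ge.
apply: le_trans (le_inv_rate L_gt0 Rt_gt0 rate).
rewrite -(expected_card_lawUXQ F).
apply: expected_card_ge.
- exact: lawUXQ_ge0.
- exact: lawUXQ_marg.
- exact: lawUXQ_supp.
- exact: lawUXQ_indep.
Qed.
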